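(* Let $A\colon\mathbb{R}_{>0}\to\mathbb{R}_{>0}$ be continuous with $\lim_{x\to\infty}A(x)=0$, and suppose $A$ has a convex differentiable tail, i.e., there is $x_0$ such that $A$ restricted to $(x_0,\infty)$ is convex and differentiable. Let $(a_t)_{t\ge1}$ be a sequence in $\mathbb{R}_{>0}$ satisfying $a_{t+1}=a_t+A(a_t)$ for all $t$, and let $f\colon\mathbb{R}_{>0}\to\mathbb{R}_{>0}$ be a function with $f'(t)=A(f(t))$ for all sufficiently large $t$. Then $\lim_{t\to\infty} f(t)/a_t=1$. *)

From Stdlib Require Import Reals.
Open Scope R_scope.

Definition convex_on_tail (A : R -> R) (x0 : R) : Prop :=
  forall x y l, x0 < x -> x0 < y -> 0 <= l <= 1 ->
    A (l * x + (1 - l) * y) <= l * A x + (1 - l) * A y.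

From Stdlib Require Import Reals Lra Lia.
Open Scope R_scope.

(* Beyond the convex tail [A] is decreasing and [phi x := x + A x] is
   nondecreasing, so the recursion [a (n+1) = phi (a n)] can be compared with
   the flow [f] sampled along time steps.  Since [f' = A o f] is nonincreasing,
   [f (s + 1) <= phi (f s)], which gives [f n <= a n + C].  Conversely, for any
   [lam > 1] convexity makes [A] flat enough far out that [phi (f s) <= f (s + lam)],
   which gives [a n <= f (c + lam n)], and concavity of [f] bounds this by
   [(1 + eps) f n].  As [a n] tends to infinity, the ratio tends to 1. *)

Lemma iterate_comparison (phi : R -> R) (X : R) (u v : nat -> R) :
  (forall x y, X <= x -> x <= y -> phi x <= phi y) ->
  (forall k, X <= u k) ->
  (forall k, u (S k) <= phi (u k)) -> (forall k, phi (v k) <= v (S k)) ->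
  u 0%nat <= v 0%nat -> forall k, u k <= v k.
Proof.
  intros phi_mono u_ge u_step v_step uv0 k; induction k as [|k IH]; [exact uv0|].
  apply Rle_trans with (phi (u k)); [apply u_step|].
  apply Rle_trans with (phi (v k)); [now apply phi_mono | apply v_step].
Qed.

Lemma eventually_INR (P : R -> Prop) :
  (exists M, forall m, M <= m -> P m) -> exists N, forall n, (N <= n)%nat -> P (INR n).
Proof.
  intros [M HM]; destruct (INR_unbounded M) as [N HN].
  exists N; intros n hn; apply HM; apply le_INR in hn; lra.
Qed.

Lemma ratio_near_one (x y eps : R) : 0 < y -> 0 < eps ->
  x <= (1 + eps / 2) * y -> y <= (1 + eps / 2) * x -> Rabs (x / y - 1) < eps.
Proof.
  intros hy heps hxy hyx.
  assert (hx : x = x / y * y) by (field; lra).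
  set (r := x / y) in *.
  rewrite hx in hxy, hyx.
  assert (hr_up : r <= 1 + eps / 2)
    by (apply Rmult_le_reg_r with y; [exact hy | lra]).
  assert (hr_low : 1 <= (1 + eps / 2) * r)
    by (apply Rmult_le_reg_r with y; [exact hy | lra]).
  apply Rabs_def1; nra.
Qed.

Section Tail.

Variable A : R -> R.
Hypothesis A_pos : forall x, 0 < x -> 0 < A x.
Hypothesis A_cont : forall x, 0 < x -> continuity_pt A x.
Hypothesis A_vanishes : forall eps, 0 < eps -> exists M, forall x, M < x -> Rabs (A x) < eps.

Variables (f : R -> R) (T : R).
Hypothesis T_nonneg : 0 <= T.
Hypothesis f_pos : forall t, 0 < t -> 0 < f t.
Hypothesis f_ode : forall t, T < t -> derivable_pt_lim f t (A (f t)).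

Variable a : nat -> R.
Hypothesis a_pos : forall n, (1 <= n)%nat -> 0 < a n.
Hypothesis a_rec : forall n, (1 <= n)%nat -> a (S n) = a n + A (a n).

Lemma A_eventually_le e : 0 < e -> exists M, forall x, M < x -> A x <= e.
Proof.
  intros he; destruct (A_vanishes e he) as [M HM].
  exists M; intros x hx; specialize (HM x hx); pose proof (Rle_abs (A x)); lra.
Qed.

Lemma A_min_on_segment p q : 0 < p -> p <= q ->
  exists mu, 0 < mu /\ forall z, p <= z <= q -> mu <= A z.
Proof.
  intros hp hpq; destruct (continuity_ab_min A p q hpq) as [m [Hm hm]].
  { intros c hc; apply A_cont; lra. }
  exists (A m); split; [apply A_pos; lra | exact Hm].
Qed.

Lemma ode_mvt s t : T < s -> s < t ->
  exists xi, s < xi < t /\ f t - f s = A (f xi) * (t - s).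
Proof.
  intros hs hst; destruct (MVT_cor2 f (fun z => A (f z)) s t hst) as [xi [Heq Hxi]].
  { intros c hc; apply f_ode; lra. }
  exists xi; split; [exact Hxi | exact Heq].
Qed.

Lemma ode_increasing s t : T < s -> s <= t -> f s <= f t.
Proof.
  intros hs [hst|hst]; [|subst; lra].
  destruct (ode_mvt s t hs hst) as [xi [hxi Hxi]].
  pose proof (A_pos (f xi) (f_pos xi ltac:(lra))).
  assert (0 < A (f xi) * (t - s)) by (apply Rmult_lt_0_compat; lra); lra.
Qed.

(* While [f] stays below a level [M'], its slope is bounded below by the
   minimum of [A] on [[f c, M']]. *)
Lemma ode_unbounded M : exists t0, T < t0 /\ forall t, t0 <= t -> M < f t.
Proof.
  set (c := T + 1); assert (hc : T < c) by (unfold c; lra).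
  assert (hfc : 0 < f c) by (apply f_pos; lra).
  set (M' := Rmax M (f c) + 1).
  pose proof (Rmax_l M (f c)); pose proof (Rmax_r M (f c)).
  destruct (A_min_on_segment (f c) M' hfc ltac:(unfold M'; lra)) as [mu [hmu Hmu]].
  assert (hq : 0 < (M' - f c) / mu) by (apply Rdiv_lt_0_compat; unfold M'; lra).
  exists (c + (M' - f c) / mu + 1); split; [lra|].
  intros t ht; destruct (Rlt_le_dec M (f t)) as [h|h]; [exact h|exfalso].
  destruct (ode_mvt c t hc ltac:(lra)) as [xi [hxi Hxi]].
  assert (f c <= f xi) by (apply ode_increasing; lra).
  assert (f xi <= f t) by (apply ode_increasing; lra).
  assert (hA : mu <= A (f xi)) by (apply Hmu; unfold M'; lra).
  assert (hgrow : M' - f c < mu * (t - c)).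
  { apply Rmult_lt_reg_l with (/ mu); [apply Rinv_0_lt_compat; lra|].
    rewrite <- Rmult_assoc, Rinv_l, Rmult_1_l by lra; unfold Rdiv in hq; lra. }
  assert (mu * (t - c) <= A (f xi) * (t - c)) by (apply Rmult_le_compat_r; lra).
  unfold M' in hgrow; lra.
Qed.

Lemma recurrence_nondecreasing n m : (1 <= n)%nat -> (n <= m)%nat -> a n <= a m.
Proof.
  intros hn hm; induction hm as [|m hm IH]; [lra|].
  rewrite a_rec by lia; pose proof (A_pos _ (a_pos m ltac:(lia))); lra.
Qed.

(* While the sequence stays in [[a 1, M]], each step adds at least the
   minimum of [A] there. *)
Lemma recurrence_unbounded M : exists N, (1 <= N)%nat /\ forall n, (N <= n)%nat -> M < a n.
Proof.
  assert (Hex : exists N, (1 <= N)%nat /\ M < a N).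
  { pose proof (a_pos 1 (le_n _)) as ha1.
    destruct (Rlt_le_dec M (a 1%nat)) as [h|h]; [exists 1%nat; split; [lia | exact h]|].
    destruct (A_min_on_segment (a 1%nat) M ha1 h) as [mu [hmu Hmu]].
    destruct (INR_unbounded ((M - a 1%nat) / mu)) as [k Hk].
    exists (1 + k)%nat; split; [lia|].
    destruct (Rlt_le_dec M (a (1 + k)%nat)) as [h2|h2]; [exact h2|exfalso].
    assert (Hgrow : forall j, (j <= k)%nat -> a 1%nat + INR j * mu <= a (1 + j)%nat).
    { induction j as [|j IH]; intros hj; [simpl; lra|].
      replace (1 + S j)%nat with (S (1 + j)) by lia.
      rewrite (a_rec (1 + j)), S_INR by lia.
      assert (a 1%nat <= a (1 + j)%nat) by (apply recurrence_nondecreasing; lia).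
      assert (a (1 + j)%nat <= a (1 + k)%nat) by (apply recurrence_nondecreasing; lia).
      assert (mu <= A (a (1 + j)%nat)) by (apply Hmu; lra).
      specialize (IH ltac:(lia)); lra. }
    specialize (Hgrow k (le_n _)).
    apply Rmult_lt_compat_r with (r := mu) in Hk; [|exact hmu].
    replace ((M - a 1%nat) / mu * mu) with (M - a 1%nat) in Hk by (field; lra); lra. }
  destruct Hex as [N [hN HN]]; exists N; split; [exact hN|].
  intros n hn; apply Rlt_le_trans with (a N); [exact HN|].
  apply recurrence_nondecreasing; assumption.
Qed.

Lemma recurrence_increments_le M1 : (forall x, M1 < x -> A x <= 1) ->
  forall n d, (1 <= n)%nat -> M1 < a n -> a (n + d)%nat <= a n + INR d.
Proof.
  intros HM1 n d hn hM; induction d as [|d IH]; [rewrite Nat.add_0_r; simpl; lra|].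
  rewrite Nat.add_succ_r, a_rec, S_INR by lia.
  pose proof (recurrence_nondecreasing n (n + d) hn ltac:(lia)).
  pose proof (HM1 (a (n + d)%nat) ltac:(lra)); lra.
Qed.

Section ConvexTail.

Variable x0 : R.
Hypothesis x0_nonneg : 0 <= x0.
Hypothesis A_convex : convex_on_tail A x0.

Lemma convex_tail_chord u x y : x0 < u -> u < x -> x < y ->
  A x + (y - x) * (A x - A u) / (x - u) <= A y.
Proof.
  intros hu hux hxy.
  set (l := (y - x) / (y - u)).
  assert (hl : 0 <= l <= 1).
  { unfold l; split; [apply Rlt_le, Rdiv_lt_0_compat; lra|].
    apply Rmult_le_reg_r with (y - u); [lra|].
    unfold Rdiv; rewrite Rmult_assoc, Rinv_l; lra. }
  assert (hx : l * u + (1 - l) * y = x) by (unfold l; field; lra).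
  pose proof (A_convex u y l hu ltac:(lra) hl) as H; rewrite hx in H.
  assert (h1l : 1 - l = (x - u) / (y - u)) by (unfold l; field; lra).
  rewrite h1l in H; unfold l in H.
  apply Rmult_le_reg_r with ((x - u) / (y - u)); [apply Rdiv_lt_0_compat; lra|].
  replace ((A x + (y - x) * (A x - A u) / (x - u)) * ((x - u) / (y - u)))
    with (A x - (y - x) / (y - u) * A u) by (field; lra).
  lra.
Qed.

Lemma convex_tail_unit_chord x y : x0 < x - 1 -> x <= y ->
  A x - (y - x) * (A (x - 1) - A x) <= A y.
Proof.
  intros h1 [h2|h2]; [|subst; lra].
  pose proof (convex_tail_chord (x - 1) x y h1 ltac:(lra) h2) as H.
  replace (x - (x - 1)) with 1 in H by ring; lra.
Qed.

(* A positive convex function tending to 0 cannot increase: a positive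
   chord slope would force it above 1 arbitrarily far out. *)
Lemma convex_tail_decreasing x y : x0 < x -> x <= y -> A y <= A x.
Proof.
  intros hx [hxy|hxy]; [|subst; lra].
  destruct (Rle_lt_dec (A y) (A x)) as [h|h]; [exact h|exfalso].
  destruct (A_eventually_le 1 ltac:(lra)) as [M HM].
  set (s := (A y - A x) / (y - x)).
  assert (hs : 0 < s) by (unfold s; apply Rdiv_lt_0_compat; lra).
  set (z := Rmax (M + 1) (y + 1 / s + 1)).
  assert (hzM : M < z) by (pose proof (Rmax_l (M + 1) (y + 1 / s + 1)); unfold z; lra).
  assert (hzy : y + 1 / s < z) by (pose proof (Rmax_r (M + 1) (y + 1 / s + 1)); unfold z; lra).
  assert (hs1 : 0 < 1 / s) by (apply Rdiv_lt_0_compat; lra).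
  pose proof (convex_tail_chord x y z hx hxy ltac:(lra)) as Hc.
  replace ((z - y) * (A y - A x) / (y - x)) with ((z - y) * s) in Hc by (unfold s; field; lra).
  assert (1 < (z - y) * s).
  { apply Rmult_lt_reg_r with (/ s); [apply Rinv_0_lt_compat; lra|].
    rewrite Rmult_assoc, Rinv_r, Rmult_1_r by lra; unfold Rdiv in hzy; lra. }
  pose proof (HM z hzM); pose proof (A_pos y ltac:(lra)); lra.
Qed.

Lemma convex_tail_threshold e : 0 < e ->
  exists X, forall x, X <= x -> x0 < x - 1 /\ A (x - 1) <= e.
Proof.
  intros he; destruct (A_eventually_le e he) as [M HM].
  exists (Rmax (x0 + 2) (M + 2)); intros x hx.
  pose proof (Rmax_l (x0 + 2) (M + 2)); pose proof (Rmax_r (x0 + 2) (M + 2)).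
  split; [lra | apply HM; lra].
Qed.

Lemma step_map_monotone x y : x0 < x - 1 -> A (x - 1) <= 1 -> x <= y ->
  x + A x <= y + A y.
Proof.
  intros h1 h2 hxy.
  pose proof (convex_tail_unit_chord x y h1 hxy); pose proof (A_pos x ltac:(lra)).
  assert ((y - x) * (A (x - 1) - A x) <= (y - x) * 1) by (apply Rmult_le_compat_l; lra).
  lra.
Qed.

Lemma convex_tail_slow_decay lam x z : 1 < lam -> x0 < x - 1 ->
  A (x - 1) <= (lam - 1) / (lam * lam) -> x <= z -> z - x <= lam * A x ->
  A x <= lam * A z.
Proof.
  intros hlam h1 h2 hxz hzx.
  pose proof (convex_tail_unit_chord x z h1 hxz) as hch.
  pose proof (A_pos x ltac:(lra)) as hAx.
  pose proof (convex_tail_decreasing (x - 1) x h1 ltac:(lra)).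
  set (e := (lam - 1) / (lam * lam)) in *.
  assert (hdrop : (z - x) * (A (x - 1) - A x) <= (lam * A x) * e)
    by (apply Rmult_le_compat; lra).
  assert (lam * A x * e = A x - A x / lam) by (unfold e; field; lra).
  assert (hz : A x / lam <= A z) by lra.
  apply Rmult_le_compat_l with (r := lam) in hz; [|lra].
  replace (lam * (A x / lam)) with (A x) in hz by (field; lra); exact hz.
Qed.

Lemma ode_slope_le s t : T < s -> x0 < f s -> s <= t -> f t - f s <= A (f s) * (t - s).
Proof.
  intros hs hfs [hst|hst]; [|subst; lra].
  destruct (ode_mvt s t hs hst) as [xi [hxi Hxi]].
  assert (f s <= f xi) by (apply ode_increasing; lra).
  assert (A (f xi) <= A (f s)) by (apply convex_tail_decreasing; lra).
  rewrite Hxi; apply Rmult_le_compat_r; lra.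
Qed.

Lemma ode_slope_ge c m : T < c -> x0 < f c -> c <= m -> A (f m) * (m - c) <= f m - f c.
Proof.
  intros hc hfc [hcm|hcm]; [|subst; lra].
  destruct (ode_mvt c m hc hcm) as [xi [hxi Hxi]].
  assert (f c <= f xi) by (apply ode_increasing; lra).
  assert (f xi <= f m) by (apply ode_increasing; lra).
  assert (A (f m) <= A (f xi)) by (apply convex_tail_decreasing; lra).
  rewrite Hxi; apply Rmult_le_compat_r; lra.
Qed.

(* Over a time step [lam > 1] the slope [A (f _)] decays by at most the factor
   [lam], so [f] gains at least [A (f s)]. *)
Lemma ode_step_ge lam s : 1 < lam -> T < s -> x0 < f s - 1 ->
  A (f s - 1) <= (lam - 1) / (lam * lam) -> f s + A (f s) <= f (s + lam).
Proof.
  intros hlam hs h1 h2.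
  destruct (ode_mvt s (s + lam) hs ltac:(lra)) as [xi [hxi Hxi]].
  replace (s + lam - s) with lam in Hxi by ring.
  assert (hAs : 0 < A (f s)) by (apply A_pos, f_pos; lra).
  assert (f s <= f xi) by (apply ode_increasing; lra).
  assert (hgain : f xi - f s <= lam * A (f s)).
  { apply Rle_trans with (A (f s) * (xi - s)); [apply ode_slope_le; lra|].
    rewrite Rmult_comm; apply Rmult_le_compat_r; lra. }
  pose proof (convex_tail_slow_decay lam (f s) (f xi) hlam h1 h2 ltac:(lra) hgain).
  lra.
Qed.

(* Concavity of [f] gives [f (c + lam m) - f m <= A (f m) ((lam - 1) m + c)]
   and [A (f m) (m - c) <= f m]. *)
Lemma ode_dilation c lam eps : T < c -> x0 < f c -> 1 <= lam -> lam - 1 < eps ->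
  exists M, forall m, M <= m -> f (c + lam * m) <= (1 + eps) * f m.
Proof.
  intros hc hfc hlam heps.
  set (M := Rmax (c + 1) (c * (1 + eps) / (eps - (lam - 1)))).
  exists M; intros m hm.
  pose proof (Rmax_l (c + 1) (c * (1 + eps) / (eps - (lam - 1)))).
  pose proof (Rmax_r (c + 1) (c * (1 + eps) / (eps - (lam - 1)))).
  assert (hcm : c < m) by (unfold M in hm; lra).
  assert (hmargin : c + (lam - 1) * m <= eps * (m - c)).
  { assert (hq : c * (1 + eps) / (eps - (lam - 1)) <= m) by (unfold M in hm; lra).
    apply Rmult_le_compat_r with (r := eps - (lam - 1)) in hq; [|lra].
    replace (c * (1 + eps) / (eps - (lam - 1)) * (eps - (lam - 1))) with (c * (1 + eps))
      in hq by (field; lra).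
    lra. }
  assert (hfcm : f c <= f m) by (apply ode_increasing; lra).
  assert (hAm : 0 < A (f m)) by (apply A_pos, f_pos; lra).
  assert (hfc0 : 0 < f c) by (apply f_pos; lra).
  pose proof (ode_slope_le m (c + lam * m) ltac:(lra) ltac:(lra) ltac:(nra)) as hup.
  pose proof (ode_slope_ge c m hc hfc ltac:(lra)) as hlow.
  assert (A (f m) * (c + lam * m - m) <= A (f m) * (eps * (m - c)))
    by (apply Rmult_le_compat_l; lra).
  assert (A (f m) * (eps * (m - c)) <= eps * (f m - f c)).
  { replace (A (f m) * (eps * (m - c))) with (eps * (A (f m) * (m - c))) by ring.
    apply Rmult_le_compat_l; lra. }
  nra.
Qed.

Lemma ode_le_recurrence_plus_const :
  exists C N, forall n, (N <= n)%nat -> f (INR n) <= a n + C.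
Proof.
  destruct (A_eventually_le 1 ltac:(lra)) as [M1 HM1].
  destruct (convex_tail_threshold 1 ltac:(lra)) as [X HX].
  destruct (ode_unbounded X) as [t0 [ht0 Ht0]].
  destruct (INR_unbounded t0) as [N0 HN0].
  destruct (recurrence_unbounded (f (INR N0))) as [Na [hNa HNa]].
  assert (Hcomp : forall k, f (INR (N0 + k)) <= a (Na + k)%nat).
  { apply (iterate_comparison (fun x => x + A x) X).
    - intros x y hx; apply step_map_monotone; apply HX; exact hx.
    - intros k; left; apply Ht0; rewrite plus_INR; pose proof (pos_INR k); lra.
    - intros k; rewrite Nat.add_succ_r, S_INR.
      set (s := INR (N0 + k)).
      assert (ht0s : t0 <= s) by (unfold s; rewrite plus_INR; pose proof (pos_INR k); lra).
      pose proof (ode_slope_le s (s + 1) ltac:(lra) ltac:(pose proof (HX (f s)); pose proof (Ht0 s ht0s); lra) ltac:(lra)).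
      lra.
    - intros k; rewrite Nat.add_succ_r, a_rec by lia; lra.
    - rewrite !Nat.add_0_r; left; apply HNa; lia. }
  destruct (recurrence_unbounded M1) as [Nb [hNb HNb]].
  exists (INR Na), (Nat.max N0 Nb); intros n hn.
  specialize (Hcomp (n - N0)%nat); replace (N0 + (n - N0))%nat with n in Hcomp by lia.
  pose proof (recurrence_nondecreasing (Na + (n - N0)) (n + Na) ltac:(lia) ltac:(lia)).
  pose proof (recurrence_increments_le M1 HM1 n Na ltac:(lia) (HNb n ltac:(lia))).
  lra.
Qed.

Lemma recurrence_le_ode_dilated lam : 1 < lam ->
  exists c N, T < c /\ x0 < f c /\ forall n, (N <= n)%nat -> a n <= f (c + lam * INR n).
Proof.
  intros hlam.
  set (e := (lam - 1) / (lam * lam)).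
  assert (he : 0 < e) by (apply Rdiv_lt_0_compat; nra).
  destruct (convex_tail_threshold (Rmin 1 e) ltac:(apply Rmin_glb_lt; lra)) as [X HX].
  pose proof (Rmin_l 1 e); pose proof (Rmin_r 1 e).
  destruct (recurrence_unbounded X) as [N [hN HN]].
  destruct (ode_unbounded (a N)) as [c [hc Hc]].
  assert (hfX : forall s, c <= s -> X < f s).
  { intros s hs; apply Rlt_trans with (a N); [apply HN; lia | apply Hc; exact hs]. }
  assert (Hcomp : forall k, a (N + k)%nat <= f (c + INR k * lam)).
  { apply (iterate_comparison (fun x => x + A x) X).
    - intros x y hx hxy; destruct (HX x hx); apply step_map_monotone; lra.
    - intros k; left; apply HN; lia.
    - intros k; rewrite Nat.add_succ_r, a_rec by lia; lra.
    - intros k; rewrite S_INR.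
      replace (c + (INR k + 1) * lam) with (c + INR k * lam + lam) by ring.
      assert (hcs : c <= c + INR k * lam) by (pose proof (pos_INR k); nra).
      destruct (HX (f (c + INR k * lam))) as [h1 h2]; [left; apply hfX; exact hcs|].
      apply ode_step_ge; fold e; lra.
    - rewrite Nat.add_0_r; simpl INR; rewrite Rmult_0_l, Rplus_0_r; left; apply Hc; lra. }
  exists c, N; split; [exact hc|split].
  - destruct (HX (f c)) as [h1 _]; [left; apply hfX; lra | lra].
  - intros n hn; specialize (Hcomp (n - N)%nat).
    replace (N + (n - N))%nat with n in Hcomp by lia.
    apply Rle_trans with (1 := Hcomp).
    assert (INR (n - N) <= INR n) by (apply le_INR; lia).
    pose proof (pos_INR (n - N)).
    apply ode_increasing; nra.
Qed.

End ConvexTail.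
End Tail.

Theorem lemma3 (A : R -> R) (a : nat -> R) (f : R -> R)
  (hApos : forall x, 0 < x -> 0 < A x)
  (hAcont : forall x, 0 < x -> continuity_pt A x)
  (hAlim : forall eps, 0 < eps -> exists M, forall x, M < x -> Rabs (A x) < eps)
  (hAtail : exists x0, 0 <= x0 /\ convex_on_tail A x0 /\
              (forall x, x0 < x -> exists l, derivable_pt_lim A x l))
  (hapos : forall t, (1 <= t)%nat -> 0 < a t)
  (harec : forall t, (1 <= t)%nat -> a (S t) = a t + A (a t))
  (hfpos : forall t, 0 < t -> 0 < f t)
  (hfder : exists T, forall t, T < t -> derivable_pt_lim f t (A (f t))) :
  Un_cv (fun t => f (INR t) / a t) 1.
Proof.
  destruct hAtail as [x0 [hx0 [hconv _]]]; destruct hfder as [T0 hT0].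
  assert (hT : forall t, Rmax T0 0 < t -> derivable_pt_lim f t (A (f t)))
    by (intros t ht; apply hT0; pose proof (Rmax_l T0 0); lra).
  pose proof (Rmax_r T0 0) as hT_nonneg.
  intros eps heps.
  destruct (ode_le_recurrence_plus_const A hApos hAcont hAlim f _ hT_nonneg hfpos hT
              a hapos harec x0 hx0 hconv) as [C [N1 H1]].
  destruct (recurrence_le_ode_dilated A hApos hAcont hAlim f _ hT_nonneg hfpos hT
              a hapos harec x0 hx0 hconv (1 + eps / 4) ltac:(lra)) as [c [N2 [hc [hfc H2]]]].
  destruct (eventually_INR _ (ode_dilation A hApos hAlim f _ hT_nonneg hfpos hT x0 hx0 hconv
              c (1 + eps / 4) (eps / 2) hc hfc ltac:(lra) ltac:(lra))) as [N3 H3].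
  destruct (recurrence_unbounded A hApos hAcont a hapos harec (Rabs C / (eps / 2)))
    as [N4 [hN4 H4]].
  exists (Nat.max (Nat.max N1 N2) (Nat.max N3 N4)); intros n hn; unfold R_dist.
  specialize (H4 n ltac:(lia)).
  assert (hC : C <= eps / 2 * a n).
  { apply Rmult_lt_compat_r with (r := eps / 2) in H4; [|lra].
    replace (Rabs C / (eps / 2) * (eps / 2)) with (Rabs C) in H4 by (field; lra).
    pose proof (Rle_abs C); lra. }
  apply ratio_near_one; [apply hapos; lia | exact heps | |].
  - specialize (H1 n ltac:(lia)); lra.
  - apply Rle_trans with (1 := H2 n ltac:(lia)); apply H3; lia.
Qed.
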